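(* Let $G=(V,E)$ be a finite planar embedded graph, $\mathbf{p}$ a packing of $G$, $V=V^+\sqcup V^-\sqcup V^=\sqcup V^0$ a partition, and $\mathbf{p}'$ a nontrivial proper infinitesimal flex. Then exactly one of the following holds: (1) $\mathbf{p}'$ is extendable; (2) there exists an equilibrium stress $\omega$ blocking $\mathbf{p}'$.
   Context: A packing of $G=(V,E)$, $V=\{1,\dots,n\}$, is $\mathbf{p}=(x_1,y_1,r_1,\dots,x_n,y_n,r_n)\in\mathbb{R}^{3n}$, all $r_i>0$, with $(r_i+r_j)^2=(x_i-x_j)^2+(y_i-y_j)^2$ for all $(i,j)\in E$ and the neighbors of each vertex in the same counterclockwise order as in the embedding; $\mathbf{p}_i=(x_i,y_i)$. Partition: $V^+$ (radius may increase or stay), $V^-$ (may decrease or stay), $V^=$ (fixed), $V^0$ (free). An infinitesimal flex is $\mathbf{p}'$ with $(\mathbf{p}_i-\mathbf{p}_j)\cdot(\mathbf{p}_i'-\mathbf{p}_j')=(r_i+r_j)(r_i'+r_j')$ for all edges; proper if $r_i'\ge 0$ on $V^+$, $\le0$ on $V^-$, $=0$ on $V^=$; trivial if it is the derivative of a family of rigid motions (rotations/translations of centers, radii unchanged). For proper $\mathbf{p}'$, the modified partition is $\tilde V^+=\{i\in V^+:r_i'=0\}$, $\tilde V^-=\{i\in V^-:r_i'=0\}$, $\tilde V^==V^=$, $\tilde V^0$ the rest. $\mathbf{p}'$ is extendable if there is $\mathbf{p}''\in\mathbb{R}^{3n}$ with $(\mathbf{p}_i-\mathbf{p}_j)\cdot(\mathbf{p}_i''-\mathbf{p}_j'')-(r_i+r_j)(r_i''+r_j'')=(r_i'+r_j')^2-(\mathbf{p}_i'-\mathbf{p}_j')\cdot(\mathbf{p}_i'-\mathbf{p}_j')$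 for all $(i,j)\in E$, and $r_i''\ge0$ on $\tilde V^+$, $\le 0$ on $\tilde V^-$, $=0$ on $\tilde V^=$. A stress $\omega:E\to\mathbb{R}$ is an equilibrium stress if $\sum_{j:(i,j)\in E}\omega_{ij}(\mathbf{p}_i-\mathbf{p}_j)=0$ for all $i$; its radial force sum is $\omega_i=\sum_{j:(i,j)\in E}\omega_{ij}(r_i+r_j)$. An equilibrium stress $\omega$ blocks $\mathbf{p}'$ if $\omega_i\ge 0$ for $i\in\tilde V^-$, $\omega_i\le0$ for $i\in\tilde V^+$, $\omega_i=0$ for $i\in\tilde V^0$, and $\sum_{(i,j)\in E}\omega_{ij}[(\mathbf{p}_i'-\mathbf{p}_j')\cdot(\mathbf{p}_i'-\mathbf{p}_j')-(r_i'+r_j')^2]>0$. *)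

From HB Require Import structures.
From mathcomp Require Import all_boot all_order all_algebra.
From mathcomp Require Import reals trigo.
Set Implicit Arguments. Unset Strict Implicit. Unset Printing Implicit Defensive.
Import Order.TTheory GRing.Theory Num.Theory.
Local Open Scope ring_scope.

Definition simple_graph n (E : rel 'I_n) :=
  symmetric E /\ irreflexive E.

(** Combinatorial embedding = rotation system: rs i lists the neighbours of i
    (each exactly once) in their counterclockwise cyclic order. *)
Definition rotation_system n (E : rel 'I_n) (rs : 'I_n -> seq 'I_n) :=
  forall i, uniq (rs i) /\ forall j, (j \in rs i) = E i j.

(** Darts (ordered adjacent pairs) and the face-tracing permutation. *)
Definition dart n (E : rel 'I_n) : pred ('I_n * 'I_n) := fun d => E d.1 d.2.
Definition face_step n (rs : 'I_n -> seq 'I_n) (d : 'I_n * 'I_n) :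
  'I_n * 'I_n := (d.2, next (rs d.2) d.1).
Definition n_faces n (E : rel 'I_n) rs :=
  n_comp (frel (face_step rs)) (dart E).
Definition n_components n (E : rel 'I_n) := n_comp E (@predT 'I_n).
Definition n_isolated n (E : rel 'I_n) := #|[pred i : 'I_n | [forall j, ~~ E i j]]|.

(** The rotation system is planar (every component has genus 0): Euler's
    formula V - E + F + #isolated = 2 * #components, multiplied by 2
    (#darts = 2 #edges). *)
Definition planar_embedding n (E : rel 'I_n) rs :=
  simple_graph E /\ rotation_system E rs /\
  (2 * (n + n_faces E rs + n_isolated E) = #|dart E| + 4 * n_components E)%N.

Section Packing.
Variable R : realType.

Definition angle_of (u v t : R) :=
  0 <= t < 2 * pi /\
  u = Num.sqrt (u ^+ 2 + v ^+ 2) * cos t /\ v = Num.sqrt (u ^+ 2 + v ^+ 2) * sin t.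

Definition ccw_around n (px py : 'I_n -> R) (c : 'I_n) (s : seq 'I_n) :=
  exists (k : nat) (ts : seq R),
    size ts = size s /\ sorted <%R ts /\
    forall m, (m < size s)%N ->
      angle_of (px (nth c (rot k s) m) - px c) (py (nth c (rot k s) m) - py c)
               (nth 0 ts m).

Definition packing n (E : rel 'I_n) (rs : 'I_n -> seq 'I_n)
    (x y r : 'I_n -> R) :=
  (forall i, 0 < r i) /\
  (forall i j, E i j ->
     (r i + r j) ^+ 2 = (x i - x j) ^+ 2 + (y i - y j) ^+ 2) /\
  (forall i, ccw_around x y i (rs i)).

Definition esum n (E : rel 'I_n) (F : 'I_n -> 'I_n -> R) :=
  \sum_(i < n) \sum_(j < n | (i < j)%N && E i j) F i j.

Definition inf_flex n (E : rel 'I_n) (x y r x' y' r' : 'I_n -> R) :=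
  forall i j, E i j ->
    (x i - x j) * (x' i - x' j) + (y i - y j) * (y' i - y' j)
    = (r i + r j) * (r' i + r' j).

(** Trivial flex: derivative at t = 0 of a family of rigid motions
    t |-> (rotation by theta(t), translation T(t)), radii unchanged;
    i.e. centres move by theta' J p_i + T', and r' = 0. *)
Definition trivial_flex n (x y x' y' r' : 'I_n -> R) :=
  exists th a b : R, forall i,
    x' i = a - th * y i /\ y' i = b + th * x i /\ r' i = 0.
End Packing.

Inductive vclass := VPlus | VMinus | VEq | VZero.

Section Flex.
Variable R : realType.

Definition sign_ok (c : vclass) (v : R) : Prop :=
  match c with
  | VPlus => 0 <= v
  | VMinus => v <= 0
  | VEq => v = 0
  | VZero => True
  end.

Definition proper_flex n (cls : 'I_n -> vclass) (r' : 'I_n -> R) :=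
  forall i, sign_ok (cls i) (r' i).

Definition mod_class n (cls : 'I_n -> vclass) (r' : 'I_n -> R) (i : 'I_n) :=
  match cls i with
  | VPlus => if r' i == 0 then VPlus else VZero
  | VMinus => if r' i == 0 then VMinus else VZero
  | VEq => VEq
  | VZero => VZero
  end.

Definition extendable n (E : rel 'I_n) (cls : 'I_n -> vclass)
    (x y r x' y' r' : 'I_n -> R) :=
  exists x'' y'' r'' : 'I_n -> R,
    (forall i j, E i j ->
       (x i - x j) * (x'' i - x'' j) + (y i - y j) * (y'' i - y'' j)
       - (r i + r j) * (r'' i + r'' j)
       = (r' i + r' j) ^+ 2
         - ((x' i - x' j) ^+ 2 + (y' i - y' j) ^+ 2)) /\
    (forall i, sign_ok (mod_class cls r' i) (r'' i)).

(** Stresses: functions on (unordered) edges, encoded symmetrically. *)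
Definition equilibrium_stress n (E : rel 'I_n) (x y : 'I_n -> R)
    (w : 'I_n -> 'I_n -> R) :=
  (forall i j, w i j = w j i) /\
  forall i,
    \sum_(j < n | E i j) w i j * (x i - x j) = 0 /\
    \sum_(j < n | E i j) w i j * (y i - y j) = 0.

Definition radial_force n (E : rel 'I_n) (r : 'I_n -> R)
    (w : 'I_n -> 'I_n -> R) (i : 'I_n) :=
  \sum_(j < n | E i j) w i j * (r i + r j).

Definition force_ok (c : vclass) (v : R) : Prop :=
  match c with
  | VPlus => v <= 0
  | VMinus => 0 <= v
  | VEq => True
  | VZero => v = 0
  end.

Definition blocks n (E : rel 'I_n) (cls : 'I_n -> vclass)
    (x y r x' y' r' : 'I_n -> R) (w : 'I_n -> 'I_n -> R) :=
  equilibrium_stress E x y w /\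
  (forall i, force_ok (mod_class cls r' i) (radial_force E r w i)) /\
  0 < esum E (fun i j => w i j *
        ((x' i - x' j) ^+ 2 + (y' i - y' j) ^+ 2 - (r' i + r' j) ^+ 2)).
End Flex.

From HB Require Import structures.
From mathcomp Require Import all_boot all_order all_algebra.
From mathcomp Require Import reals trigo.
From mathcomp Require Import ring lra zify.
Set Implicit Arguments. Unset Strict Implicit. Unset Printing Implicit Defensive.
Import Order.TTheory GRing.Theory Num.Theory.
Local Open Scope ring_scope.

(* The conditions on
   [p''] form a finite linear system (one equation per edge, one sign
   condition per vertex of the modified partition), so by Farkas' lemma,
   proved here by Fourier-Motzkin elimination, it is infeasible iff some
   nonnegative combination of its rows reads [0 <= b] with [b < 0].  Such a
   combination pairs a weighting [w] of the darts with the edge rows and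
   multipliers [mu] with the sign rows; summation by parts turns the
   vanishing of the unknowns' coefficients into: [w + w^T] is an equilibrium
   stress whose radial force sums are [mu], hence have the blocking sign
   pattern, and [b < 0] says exactly that it blocks [p'].  Conversely, pairing
   a blocking stress with the equations of an extension yields a quantity
   that is nonnegative by the sign conditions and equal to minus twice the
   positive blocking sum. *)

Section Farkas.
Variable R : realFieldType.

Definition dot (m : nat) (a z : nat -> R) := \sum_(k < m) a k * z k.

Lemma dotD m (a1 a2 z : nat -> R) :
  dot m (fun k => a1 k + a2 k) z = dot m a1 z + dot m a2 z.
Proof. by rewrite /dot -big_split; apply: eq_bigr => k _; rewrite mulrDl. Qed.

Lemma dotZ m c (a z : nat -> R) : dot m (fun k => c * a k) z = c * dot m a z.
Proof. by rewrite /dot mulr_sumr; apply: eq_bigr => k _; rewrite mulrA. Qed.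

Definition unit_row (l : nat) : nat -> R := fun k => (k == l)%:R.

Lemma dot_unit_row m l (z : nat -> R) : (l < m)%N -> dot m (unit_row l) z = z l.
Proof.
move=> lm; rewrite /dot /unit_row (bigD1 (Ordinal lm)) //= eqxx mul1r big1 ?addr0 // => k kl.
by rewrite -val_eqE /= in kl; rewrite (negbTE kl) mul0r.
Qed.

Lemma dot_extend m (a z : nat -> R) t :
  dot m.+1 a (fun k => if k == m then t else z k) = dot m a z + a m * t.
Proof.
rewrite /dot big_ord_recr /= eqxx; congr (_ + _); apply: eq_bigr => k _.
by rewrite ltn_eqF.
Qed.

Inductive cone (I : Type) (C : I -> (nat -> R) * R) : (nat -> R) -> R -> Prop :=
| cone_row i : cone C (C i).1 (C i).2
| coneD a1 b1 a2 b2 : cone C a1 b1 -> cone C a2 b2 ->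
    cone C (fun k => a1 k + a2 k) (b1 + b2)
| coneZ c a b : 0 <= c -> cone C a b -> cone C (fun k => c * a k) (c * b).

Lemma cone_trans I J (C : I -> (nat -> R) * R) (D : J -> (nat -> R) * R) :
  (forall j, cone C (D j).1 (D j).2) -> forall a b, cone D a b -> cone C a b.
Proof.
move=> DC a b; elim=> [j|a1 b1 a2 b2 _ h1 _ h2|c a0 b0 c_ge0 _ h].
- exact: DC.
- exact: coneD h1 h2.
- exact: coneZ c_ge0 h.
Qed.

Section Elimination.
Variables (m : nat) (I : finType) (C : I -> (nat -> R) * R).

Local Notation lead i := ((C i).1 m).

Definition fm_combine (c1 : R) (i1 : I) (c2 : R) (i2 : I) : (nat -> R) * R :=
  (fun k => c1 * (C i1).1 k + c2 * (C i2).1 k, c1 * (C i1).2 + c2 * (C i2).2).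

(* One Fourier-Motzkin step eliminating variable [m]; the indices that do not
   qualify give the trivial row [0 <= 0]. *)
Definition fm_row (j : I + I * I) : (nat -> R) * R :=
  match j with
  | inl i => fm_combine (lead i == 0)%:R i 0 i
  | inr (p, q) =>
      if (0 < lead p) && (lead q < 0) then fm_combine (- lead q) p (lead p) q
      else fm_combine 0 p 0 q
  end.

Lemma cone_fm_combine c1 i1 c2 i2 : 0 <= c1 -> 0 <= c2 ->
  cone C (fm_combine c1 i1 c2 i2).1 (fm_combine c1 i1 c2 i2).2.
Proof. by move=> c1_ge0 c2_ge0; apply: coneD; apply: coneZ => //; apply: cone_row. Qed.

Lemma cone_fm_row j : cone C (fm_row j).1 (fm_row j).2.
Proof.
case: j => [i|[p q]] /=; first exact: cone_fm_combine.
case: ifP => [/andP [p_pos q_neg]|_]; last exact: cone_fm_combine.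
by apply: cone_fm_combine; rewrite ?oppr_ge0 ltW.
Qed.

Lemma cone_fm_row_lead a b : cone fm_row a b -> a m = 0.
Proof.
elim=> [[i|[p q]]|a1 b1 a2 b2 _ -> _ ->|c a0 b0 _ _ ->]; rewrite ?addr0 ?mulr0 //=.
- by case: eqP => [->|_]; rewrite ?mulr0 ?mul0r ?addr0.
- by case: ifP => _ /=; ring.
Qed.

Section Lift.
Variable z : nat -> R.
Hypothesis z_feasible : forall j, dot m (fm_row j).1 z <= (fm_row j).2.

(* The bound on variable [m] imposed by row [i], when [lead i != 0]. *)
Let bound i := ((C i).2 - dot m (C i).1 z) / lead i.

Lemma fm_bound_le p q : 0 < lead p -> lead q < 0 -> bound q <= bound p.
Proof.
move=> p_pos q_neg; have := z_feasible (inr (p, q)).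
rewrite /= p_pos q_neg /= dotD !dotZ /bound.
set P := lead p; set Q := lead q => feas.
have PQ_pos : 0 < P * - Q by rewrite mulr_gt0 // oppr_gt0.
rewrite -(ler_pM2r PQ_pos).
have -> : ((C q).2 - dot m (C q).1 z) / Q * (P * - Q) = - P * ((C q).2 - dot m (C q).1 z).
  by rewrite mulrCA mulrN -mulrA mulVf ?lt_eqF // mulr1 mulrN mulNr mulrC.
have -> : ((C p).2 - dot m (C p).1 z) / P * (P * - Q) = - Q * ((C p).2 - dot m (C p).1 z).
  by rewrite mulrA divfK ?gt_eqF // mulrC.
lra.
Qed.

Lemma fm_lift : exists t, forall i,
  dot m.+1 (C i).1 (fun k => if k == m then t else z k) <= (C i).2.
Proof.
pose t0 := \big[Num.min/0]_(p | 0 < lead p) bound p.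
exists (\big[Num.max/t0]_(q | lead q < 0) bound q) => i; rewrite dot_extend.
set t := \big[Num.max/t0]_(q | _) _.
have bound_lead : lead i != 0 -> bound i * lead i = (C i).2 - dot m (C i).1 z.
  by move=> ?; rewrite /bound divfK.
case: (ltgtP (lead i) 0) => i_lead.
- have : bound i <= t by apply: le_bigmax_cond.
  have := bound_lead (ltr0_neq0 i_lead); nra.
- have : t <= bound i.
    apply: bigmax_le => [|q q_neg]; first exact: bigmin_le_cond.
    exact: fm_bound_le.
  have := bound_lead (lt0r_neq0 i_lead); nra.
- by have := z_feasible (inl i); rewrite /= i_lead eqxx dotD !dotZ /=; lra.
Qed.
End Lift.
End Elimination.

Theorem farkas m (I : finType) (C : I -> (nat -> R) * R) :
  (exists z, forall i, dot m (C i).1 z <= (C i).2) \/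
  (exists a b, [/\ cone C a b, forall k, (k < m)%N -> a k = 0 & b < 0]).
Proof.
elim: m I C => [|m IHm] I C.
  have [i b_neg|no_neg] := pickP (fun i => (C i).2 < 0).
    by right; exists (C i).1, (C i).2; split => //; apply: cone_row.
  by left; exists (fun _ => 0) => i; rewrite /dot big_ord0 leNgt no_neg.
have [[z feas]|[a [b [cone_ab a0 b_neg]]]] := IHm _ (fm_row m C).
  by have [t ht] := fm_lift feas; left; exists (fun k => if k == m then t else z k).
right; exists a, b; split => //; first exact: cone_trans (cone_fm_row m C) _ _ cone_ab.
move=> k; rewrite ltnS leq_eqVlt => /orP [/eqP ->|]; last exact: a0.
exact: cone_fm_row_lead cone_ab.
Qed.
End Farkas.

Section DartSums.
Variables (R : pzRingType) (n : nat) (E : rel 'I_n).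

Definition dsum (F : 'I_n -> 'I_n -> R) := \sum_(i < n) \sum_(j < n | E i j) F i j.

Lemma eq_dsum F G : (forall i j, E i j -> F i j = G i j) -> dsum F = dsum G.
Proof. by move=> FG; apply: eq_bigr => i _; apply: eq_bigr => j; apply: FG. Qed.

Lemma dsumD F G : dsum (fun i j => F i j + G i j) = dsum F + dsum G.
Proof. by rewrite /dsum -big_split; apply: eq_bigr => i _; rewrite big_split. Qed.

Lemma dsum_delta i0 j0 c F : E i0 j0 ->
  dsum (fun i j => (if (i == i0) && (j == j0) then c else 0) * F i j) = c * F i0 j0.
Proof.
move=> Ei0j0; rewrite /dsum (bigD1 i0) //= [X in _ + X]big1 => [|i i_ne]; last first.
  by rewrite big1 // => j _; rewrite (negbTE i_ne) mul0r.
rewrite (bigD1 j0) //= !eqxx big1 ?addr0 // => j /andP [_ j_ne].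
by rewrite (negbTE j_ne) andbF mul0r.
Qed.

Lemma dsum0 : dsum (fun _ _ => 0) = 0.
Proof. by rewrite /dsum big1 // => i _; rewrite big1. Qed.

Lemma dsumDl w1 w2 F :
  dsum (fun i j => (w1 i j + w2 i j) * F i j)
  = dsum (fun i j => w1 i j * F i j) + dsum (fun i j => w2 i j * F i j).
Proof. by rewrite -dsumD; apply: eq_dsum => i j _; rewrite mulrDl. Qed.

Lemma dsumZl c w F :
  dsum (fun i j => (c * w i j) * F i j) = c * dsum (fun i j => w i j * F i j).
Proof.
rewrite /dsum mulr_sumr; apply: eq_bigr => i _.
by rewrite mulr_sumr; apply: eq_bigr => j _; rewrite mulrA.
Qed.

Lemma dsumN F : dsum (fun i j => - F i j) = - dsum F.
Proof. by rewrite /dsum -sumrN; apply: eq_bigr => i _; rewrite -sumrN. Qed.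

Hypothesis symE : symmetric E.

Lemma dsum_transpose F : dsum F = dsum (fun i j => F j i).
Proof.
rewrite /dsum; under eq_bigr do rewrite big_mkcond.
under [RHS]eq_bigr do rewrite big_mkcond.
by rewrite exchange_big; apply: eq_bigr => i _; apply: eq_bigr => j _; rewrite symE.
Qed.

Lemma dsum_symmetrize w F : (forall i j, F i j = F j i) ->
  dsum (fun i j => (w i j + w j i) * F i j) = dsum (fun i j => w i j * F i j) *+ 2.
Proof.
move=> Fsym; rewrite dsumDl [X in _ + X]dsum_transpose mulr2n; congr (_ + _).
by apply: eq_dsum => i j _; rewrite Fsym.
Qed.
End DartSums.

Lemma dsum_esum (R : realType) n (E : rel 'I_n) (F : 'I_n -> 'I_n -> R) :
  symmetric E -> irreflexive E -> (forall i j, F i j = F j i) ->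
  dsum E F = esum E F *+ 2.
Proof.
move=> symE irrE Fsym.
have -> : dsum E F = dsum E (fun i j => (if (i < j)%N then F i j else 0)
                                    + if (j < i)%N then F j i else 0).
  apply: eq_dsum => i j Eij; case: (ltngtP i j) => [_|_|ij] /=.
  - by rewrite addr0.
  - by rewrite add0r Fsym.
  - by move: Eij; rewrite (val_inj ij) irrE.
rewrite dsumD [X in _ + X](dsum_transpose symE) /= -mulr2n; congr (_ *+ 2).
rewrite /dsum /esum; apply: eq_bigr => i _.
by rewrite [LHS]big_mkcond [RHS]big_mkcond; apply: eq_bigr => j _; case: (i < j)%N; case: (E i j).
Qed.

Section Signs.
Variable R : realType.

Lemma sign_force_le0 c (v u : R) : sign_ok c v -> force_ok c u -> v * u <= 0.
Proof. by case: c => /= [v_ge0 u_le0|v_le0 u_ge0|-> _|_ ->]; rewrite ?mul0r ?mulr0 //; nra. Qed.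

Definition sign_row (c : vclass) (s : bool) : R :=
  match c, s with
  | VPlus, true => -1
  | VMinus, true => 1
  | VEq, true => 1
  | VEq, false => -1
  | _, _ => 0
  end.

Lemma sign_okP c (v : R) : sign_ok c v <-> forall s, sign_row c s * v <= 0.
Proof.
split; first by case: c => /= v_ok [] /=; lra.
by case: c => //= v_ok; move: (v_ok true) (v_ok false) => /=; lra.
Qed.

Lemma force_ok_sign_row c s : force_ok c (sign_row c s).
Proof. by case: c; case: s => //=; lra. Qed.

Lemma force_ok0 c : force_ok c (0 : R).
Proof. by case: c => /=. Qed.

Lemma force_okD c (u1 u2 : R) : force_ok c u1 -> force_ok c u2 -> force_ok c (u1 + u2).
Proof. by case: c => //=; lra. Qed.

Lemma force_okZ c k (u : R) : 0 <= k -> force_ok c u -> force_ok c (k * u).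
Proof. by case: c => /= k_ge0 => [||//|->]; rewrite ?mulr0 //; nra. Qed.
End Signs.

Section Alternative.
Variables (R : realType) (n : nat) (E : rel 'I_n).
Hypotheses (symE : symmetric E) (irrE : irreflexive E).
Variables (x y r x' y' r' : 'I_n -> R) (cls : 'I_n -> vclass).

Local Notation cls' := (mod_class cls r').

Definition edge_lin (X Y Z : 'I_n -> R) i j :=
  (x i - x j) * (X i - X j) + (y i - y j) * (Y i - Y j)
  - (r i + r j) * (Z i + Z j).

Definition edge_rhs i j :=
  (r' i + r' j) ^+ 2 - ((x' i - x' j) ^+ 2 + (y' i - y' j) ^+ 2).

Definition stretch i j :=
  (x' i - x' j) ^+ 2 + (y' i - y' j) ^+ 2 - (r' i + r' j) ^+ 2.

Definition net_force (p : 'I_n -> R) (w : 'I_n -> 'I_n -> R) i :=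
  \sum_(j < n | E i j) w i j * (p i - p j).

Definition symw (w : 'I_n -> 'I_n -> R) i j := w i j + w j i.

Lemma dsum_edge_lin w X Y Z :
  dsum E (fun i j => w i j * edge_lin X Y Z i j) =
  \sum_(i < n) (X i * net_force x (symw w) i + Y i * net_force y (symw w) i
                - Z i * radial_force E r (symw w) i).
Proof.
pose K i j := X i * (x i - x j) + Y i * (y i - y j) - Z i * (r i + r j).
have -> : dsum E (fun i j => w i j * edge_lin X Y Z i j)
          = dsum E (fun i j => w i j * K i j + w j i * K i j).
  rewrite dsumD [X in _ = _ + X](dsum_transpose symE) -dsumD.
  by apply: eq_dsum => i j _; rewrite /K /edge_lin; ring.
rewrite /dsum; apply: eq_bigr => i _.
rewrite /net_force /radial_force !mulr_sumr -!big_split -sumrB /=.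
by apply: eq_bigr => j _; rewrite /K /symw; ring.
Qed.

Lemma net_force_symw p w i : (forall i j, w i j = w j i) ->
  net_force p (symw w) i = net_force p w i *+ 2.
Proof.
move=> wsym; rewrite /net_force -sumrMnl; apply: eq_bigr => j _.
by rewrite /symw (wsym j i) -mulr2n mulrnAl.
Qed.

Lemma radial_force_symw w i : (forall i j, w i j = w j i) ->
  radial_force E r (symw w) i = radial_force E r w i *+ 2.
Proof.
move=> wsym; rewrite /radial_force -sumrMnl; apply: eq_bigr => j _.
by rewrite /symw (wsym j i) -mulr2n mulrnAl.
Qed.

Lemma dsum_edge_rhs w : (forall i j, w i j = w j i) ->
  dsum E (fun i j => w i j * edge_rhs i j)
  = - (esum E (fun i j => w i j * stretch i j) *+ 2).
Proof.
move=> wsym; rewrite -(dsum_esum symE irrE) => [|i j]; last first.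
  by rewrite wsym /stretch; ring.
by rewrite -dsumN; apply: eq_dsum => i j _; rewrite /edge_rhs /stretch; ring.
Qed.

Lemma extendable_unblocked :
  extendable E cls x y r x' y' r' ->
  ~ exists w, blocks E cls x y r x' y' r' w.
Proof.
move=> [x'' [y'' [r'' [lin_eq r''_ok]]]] [w [[wsym w_eq] [w_force w_pos]]].
have pairing_ge0 : 0 <= dsum E (fun i j => w i j * edge_lin x'' y'' r'' i j).
  rewrite dsum_edge_lin; apply: sumr_ge0 => i _.
  rewrite !net_force_symw // radial_force_symw // /net_force (w_eq i).1 (w_eq i).2.
  have := sign_force_le0 (r''_ok i) (w_force i); rewrite !mul0rn !mulr0 mulr2n; lra.
have pairing_eq : dsum E (fun i j => w i j * edge_lin x'' y'' r'' i j)
                  = dsum E (fun i j => w i j * edge_rhs i j).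
  by apply: eq_dsum => i j Eij; rewrite /edge_rhs -lin_eq.
have w_pos' : 0 < esum E (fun i j => w i j * stretch i j) := w_pos.
by move: pairing_ge0; rewrite pairing_eq dsum_edge_rhs //; lra.
Qed.

(* The unknowns [x''_i], [y''_i], [r''_i] are stored in [z : nat -> R] at the
   indices [3i], [3i+1], [3i+2]. *)
Definition slot (c : nat) (i : 'I_n) : nat := (3 * i + c)%N.
Definition coords (z : nat -> R) c i := z (slot c i).

Lemma slot_lt c i : (c < 3)%N -> (slot c i < 3 * n)%N.
Proof. by rewrite /slot; have := ltn_ord i; lia. Qed.

Lemma eq_slot c c' i i' : (c < 3)%N -> (c' < 3)%N ->
  (slot c i == slot c' i') = (c == c') && (i == i').
Proof.
move=> c3 c'3; apply/eqP/andP => [eq_ci|[/eqP -> /eqP -> //]].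
have ii' : i = i' :> nat by move: eq_ci; rewrite /slot; lia.
have cc' : c = c' by move: eq_ci; rewrite /slot; lia.
by rewrite cc' (val_inj ii') !eqxx.
Qed.

Definition edge_row i j : nat -> R := fun k =>
  (x i - x j) * unit_row R (slot 0 i) k + (x j - x i) * unit_row R (slot 0 j) k
  + ((y i - y j) * unit_row R (slot 1 i) k + (y j - y i) * unit_row R (slot 1 j) k)
  + (- (r i + r j) * unit_row R (slot 2 i) k + - (r i + r j) * unit_row R (slot 2 j) k).

Lemma dot_edge_row i j z :
  dot (3 * n) (edge_row i j) z = edge_lin (coords z 0) (coords z 1) (coords z 2) i j.
Proof.
rewrite /edge_row !dotD !dotZ !dot_unit_row ?slot_lt //.
by rewrite /edge_lin /coords; ring.
Qed.

Definition constraint := ({d : 'I_n * 'I_n | E d.1 d.2} * bool + 'I_n * bool)%type.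

Definition row (c : constraint) : (nat -> R) * R :=
  match c with
  | inl (d, s) => (fun k => (-1) ^+ s * edge_row (val d).1 (val d).2 k,
                   (-1) ^+ s * edge_rhs (val d).1 (val d).2)
  | inr (i, s) => (fun k => sign_row R (cls' i) s * unit_row R (slot 2 i) k, 0)
  end.

Lemma feasible_extendable z :
  (forall c, dot (3 * n) (row c).1 z <= (row c).2) ->
  extendable E cls x y r x' y' r'.
Proof.
move=> feas; exists (coords z 0), (coords z 1), (coords z 2); split => [i j Eij|i].
  suff : edge_lin (coords z 0) (coords z 1) (coords z 2) i j = edge_rhs i j by [].
  have := feas (inl (exist _ (i, j) Eij, false)).
  have := feas (inl (exist _ (i, j) Eij, true)).
  rewrite /= !dotZ dot_edge_row expr1 expr0 !mulN1r !mul1r; lra.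
apply/sign_okP => s; have := feas (inr (i, s)).
by rewrite /= dotZ dot_unit_row ?slot_lt.
Qed.

Definition pairing w mu (z : nat -> R) :=
  dsum E (fun i j => w i j * edge_lin (coords z 0) (coords z 1) (coords z 2) i j)
  + \sum_(i < n) mu i * coords z 2 i.

(* [w] weights the darts and need not be symmetric: the stress extracted from
   a certificate is its symmetrization [symw w]. *)
Definition stress_repr (a : nat -> R) (b : R) := exists w mu,
  [/\ forall i, force_ok (cls' i) (mu i),
      forall z, dot (3 * n) a z = pairing w mu z &
      b = dsum E (fun i j => w i j * edge_rhs i j)].

Lemma stress_repr_row c : stress_repr (row c).1 (row c).2.
Proof.
case: c => [[[[i j] Eij] s]|[i s]] /=.
  exists (fun i' j' => if (i' == i) && (j' == j) then (-1) ^+ s else 0), (fun _ => 0).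
  split=> [i'||]; first exact: force_ok0.
  - move=> z; rewrite dotZ dot_edge_row /pairing (dsum_delta _ _ Eij).
    by rewrite big1 ?addr0 // => k _; rewrite mul0r.
  - by rewrite (dsum_delta _ _ Eij).
exists (fun _ _ => 0), (fun i' => if i' == i then sign_row R (cls' i) s else 0).
split=> [i'||].
- by case: eqP => [->|_]; [apply: force_ok_sign_row | apply: force_ok0].
- move=> z; rewrite dotZ dot_unit_row ?slot_lt // /pairing.
  under eq_dsum do rewrite mul0r.
  rewrite dsum0 add0r (bigD1 i) //= eqxx big1 ?addr0 // => k /negbTE ->.
  by rewrite mul0r.
- by under eq_dsum do rewrite mul0r; rewrite dsum0.
Qed.

Lemma stress_reprD a1 b1 a2 b2 : stress_repr a1 b1 -> stress_repr a2 b2 ->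
  stress_repr (fun k => a1 k + a2 k) (b1 + b2).
Proof.
move=> [w1 [mu1 [mu1_ok a1_eq ->]]] [w2 [mu2 [mu2_ok a2_eq ->]]].
exists (fun i j => w1 i j + w2 i j), (fun i => mu1 i + mu2 i).
split=> [i|z|]; last by rewrite dsumDl.
  exact: force_okD.
rewrite dotD a1_eq a2_eq /pairing dsumDl.
rewrite [X in _ = _ + X](eq_bigr (fun i => mu1 i * coords z 2 i + mu2 i * coords z 2 i)).
  by rewrite big_split /=; ring.
by move=> i _; rewrite mulrDl.
Qed.

Lemma stress_reprZ c a b : 0 <= c -> stress_repr a b ->
  stress_repr (fun k => c * a k) (c * b).
Proof.
move=> c_ge0 [w [mu [mu_ok a_eq ->]]].
exists (fun i j => c * w i j), (fun i => c * mu i).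
split=> [i|z|]; last by rewrite dsumZl.
  exact: force_okZ.
rewrite dotZ a_eq /pairing dsumZl mulrDr; congr (_ + _).
by rewrite mulr_sumr; apply: eq_bigr => i _; rewrite mulrA.
Qed.

Lemma cone_stress_repr a b : cone row a b -> stress_repr a b.
Proof.
elim=> [c|a1 b1 a2 b2 _ h1 _ h2|c a0 b0 c_ge0 _ h].
- exact: stress_repr_row.
- exact: stress_reprD h1 h2.
- exact: stress_reprZ c_ge0 h.
Qed.

Lemma pairing_expand w mu z :
  pairing w mu z =
  \sum_(i < n) (coords z 0 i * net_force x (symw w) i
                + coords z 1 i * net_force y (symw w) i
                + coords z 2 i * (mu i - radial_force E r (symw w) i)).
Proof. by rewrite /pairing dsum_edge_lin -big_split; apply: eq_bigr => i _ /=; ring. Qed.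

Lemma coords_unit_row c c' i0 i : (c < 3)%N -> (c' < 3)%N ->
  coords (unit_row R (slot c i0)) c' i = ((c' == c) && (i == i0))%:R.
Proof. by move=> c3 c'3; rewrite /coords /unit_row eq_slot. Qed.

Lemma pairing_unit_row w mu c i0 : (c < 3)%N ->
  pairing w mu (unit_row R (slot c i0)) =
  [:: net_force x (symw w) i0; net_force y (symw w) i0;
      mu i0 - radial_force E r (symw w) i0]`_c.
Proof.
move=> c3; rewrite pairing_expand (bigD1 i0) //= big1 => [|i i_ne]; last first.
  by rewrite !coords_unit_row // (negbTE i_ne) !andbF /=; ring.
by rewrite !coords_unit_row // eqxx; case: c c3 => [|[|[|]]] //= _; ring.
Qed.

Lemma edge_rhsC i j : edge_rhs i j = edge_rhs j i.
Proof. by rewrite /edge_rhs; ring. Qed.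

Lemma certificate_blocks a b :
  stress_repr a b -> (forall k, (k < 3 * n)%N -> a k = 0) -> b < 0 ->
  exists w, blocks E cls x y r x' y' r' w.
Proof.
move=> [w [mu [mu_ok a_eq b_eq]]] a0 b_neg.
have unit0 c i : (c < 3)%N ->
    [:: net_force x (symw w) i; net_force y (symw w) i;
        mu i - radial_force E r (symw w) i]`_c = 0.
  by move=> c3; rewrite -pairing_unit_row // -a_eq /dot big1 // => k _; rewrite a0 ?mul0r.
have symw_sym i j : symw w i j = symw w j i by rewrite /symw addrC.
exists (symw w); split; [split=> // i|split=> [i|]].
- exact: (conj (unit0 0%N i isT) (unit0 1%N i isT)).
- by have /eqP := unit0 2%N i isT; rewrite subr_eq0 => /eqP <-.
- change (0 < esum E (fun i j => symw w i j * stretch i j)).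
  have := dsum_edge_rhs symw_sym; rewrite (dsum_symmetrize symE _ edge_rhsC) -b_eq.
  rewrite !mulr2n; lra.
Qed.
End Alternative.

Theorem mainTheorem9 (R : realType) (n : nat) (E : rel 'I_n)
    (rs : 'I_n -> seq 'I_n) (x y r : 'I_n -> R) (cls : 'I_n -> vclass)
    (x' y' r' : 'I_n -> R) :
  planar_embedding E rs ->
  packing E rs x y r ->
  inf_flex E x y r x' y' r' ->
  proper_flex cls r' ->
  ~ trivial_flex x y x' y' r' ->
  (extendable E cls x y r x' y' r' <->
   ~ (exists w : 'I_n -> 'I_n -> R, blocks E cls x y r x' y' r' w)).
Proof.
move=> [[symE irrE] _] _ _ _ _; split; first exact: extendable_unblocked.
move=> unblocked.
have [[z feasible]|[a [b [cone_ab a0 b_neg]]]] :=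
  farkas (3 * n) (row (E := E) x y r x' y' r' cls).
  exact: feasible_extendable feasible.
by case: unblocked; apply: certificate_blocks (cone_stress_repr cone_ab) a0 b_neg.
Qed.
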